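(* Let $p$ be a prime and $n,k$ natural numbers with $n+1<p$ and $k<p$. Let $(A,+,\circ)$ be a strongly nilpotent brace of cardinality $p^n$ with nilpotency index $k$. Let $\gamma$ be a primitive root modulo $p^p$, $\xi=\gamma^{p^{p-1}}$, and define $a\cdot b=\sum_{i=0}^{p-2}\xi^{p-1-i}((\xi^i a)*b)$ for $a,b\in A$. Then $(a+b)\cdot c=a\cdot c+b\cdot c$ and $a\cdot(b+c)=a\cdot b+a\cdot c$ for all $a,b,c\in A$.
   Context: A (left) brace is a set $A$ with binary operations $+,\circ$ such that $(A,+)$ is an abelian group, $(A,\circ)$ is a group, and $a\circ(b+c)+a=a\circ b+a\circ c$ for all $a,b,c$. Write $a*b=a\circ b-a-b$. For additive subgroups $X,Y$, $X*Y$ is the additive subgroup generated by all $x*y$. Set $A^{[1]}=A$, $A^{[i+1]}=\sum_{j=1}^{i}A^{[j]}*A^{[i+1-j]}$. The brace is strongly nilpotent if $A^{[m]}=0$ for some $m$ and has nilpotency index $k$ if $A^{[k]}=0\neq A^{[k-1]}$. For an integer $m$ and $a\in A$, $ma$ denotes the $m$-fold additive multiple (so $\xi^i a$ is the sum of $\xi^i$ copies of $a$). *)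

From mathcomp Require Import all_boot all_algebra.
Set Implicit Arguments. Unset Strict Implicit. Unset Printing Implicit Defensive.
Import GRing.Theory.
Local Open Scope ring_scope.

Definition is_brace (A : zmodType) (circ : A -> A -> A) : Prop :=
  [/\ (forall a b c, circ a (circ b c) = circ (circ a b) c),
      (exists e : A, (forall a, circ e a = a /\ circ a e = a) /\
                     (forall a, exists a', circ a a' = e /\ circ a' a = e))
    & (forall a b c, circ a (b + c) + a = circ a b + circ a c)].

Definition bstar (A : zmodType) (circ : A -> A -> A) (a b : A) : A :=
  circ a b - a - b.

Inductive addgen (A : zmodType) (S : A -> Prop) : A -> Prop :=
| addgen_in : forall x, S x -> addgen S x
| addgen_0 : addgen S 0
| addgen_add : forall x y, addgen S x -> addgen S y -> addgen S (x + y)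
| addgen_opp : forall x, addgen S x -> addgen S (- x).

Definition bstar_set (A : zmodType) (circ : A -> A -> A) (X Y : A -> Prop) :
  A -> Prop :=
  addgen (fun z => exists x y, [/\ X x, Y y & z = bstar circ x y]).

(* bpow_aux circ m i = A^[i] for 1 <= i <= m.+1. *)
Fixpoint bpow_aux (A : zmodType) (circ : A -> A -> A) (m : nat) : nat -> A -> Prop :=
  match m with
  | 0 => fun _ _ => True
  | m'.+1 => fun i =>
      if (i <= m'.+1)%N then bpow_aux circ m' i
      else addgen (fun x => exists j, [/\ (1 <= j)%N, (j <= m'.+1)%N &
                   bstar_set circ (bpow_aux circ m' j)
                                  (bpow_aux circ m' (m'.+2 - j)) x])
  end.

(* A^[i] ; A^[1] = A (and by convention A^[0] = A). *)
Definition bpow (A : zmodType) (circ : A -> A -> A) (i : nat) : A -> Prop :=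
  bpow_aux circ i i.

Definition is_zero_set (A : zmodType) (X : A -> Prop) : Prop :=
  forall x, X x -> x = 0.

Definition strongly_nilpotent (A : zmodType) (circ : A -> A -> A) : Prop :=
  exists m, is_zero_set (bpow circ m).

Definition nilpotency_index (A : zmodType) (circ : A -> A -> A) (k : nat) : Prop :=
  is_zero_set (bpow circ k) /\ ~ is_zero_set (bpow circ k.-1).

Definition primitive_root_mod (m g : nat) : Prop :=
  coprime g m /\
  (forall j, (0 < j)%N -> (j < totient m)%N -> (g ^ j %% m <> 1 %% m)%N).

Definition bdot (A : zmodType) (circ : A -> A -> A) (p xi : nat) (a b : A) : A :=
  \sum_(i < p.-1) (bstar circ (a *+ (xi ^ i)%N) b) *+ (xi ^ (p.-1 - i))%N.

From mathcomp Require Import all_boot all_algebra.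
From mathcomp Require Import fingroup cyclic zify.
Import GRing.Theory.
Local Open Scope ring_scope.
Set Implicit Arguments. Unset Strict Implicit.

(* For fixed [c], the map [(m, l) |-> (m a + l b) * c] is a polynomial in [m]
   and [l] whose coefficient of [m^i l^j] lies in [A^[i+j]], so only degrees
   below [k] occur. This is proved by downward induction on the layers: a sum
   [x + y] is rewritten as [x o z] with [lambda_x(z) = y], and the powers
   [u^(o N)] and [lambda_u^N] are expanded in binomial coefficients [C(N, t)]
   with [t < k < p], which are polynomials in [N] because [t!] is invertible on
   [A]. For [2 <= t < p], [xi^(t-1)] is a nontrivial [(p-1)]-th root of unity
   modulo [p^p], so the weighted sums [sum_i xi^(p-1-i) (xi^i)^t] vanish modulo
   [#|A|]. The weighted sum defining [a . c] therefore only sees the part of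
   degree one, which is additive in [a]. *)

Section BraceCalculus.
Variables (A : zmodType) (circ : A -> A -> A).
Hypothesis brace : is_brace circ.
Local Notation star := (bstar circ).

Definition lam (x y : A) := circ x y - x.

Lemma circA x y z : circ x (circ y z) = circ (circ x y) z.
Proof. by case: brace. Qed.

Lemma circDr x y z : circ x (y + z) = circ x y + circ x z - x.
Proof. by case: brace => _ _ law; rewrite -law addrK. Qed.

Lemma circx0 x : circ x 0 = x.
Proof.
have := circDr x 0 0; rewrite addr0 => /(congr1 (fun t => t - circ x 0)).
by rewrite subrr addrAC addrK => /eqP; rewrite eq_sym subr_eq0 => /eqP.
Qed.

Lemma circ0x x : circ 0 x = x.
Proof.
case: brace => _ [e [unit_e _]] _.
have e0 : e = 0 by case: (unit_e 0) => e0 _; rewrite -[e]circx0.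
by case: (unit_e x); rewrite e0.
Qed.

Lemma circE x y : circ x y = x + lam x y.
Proof. by rewrite /lam addrC subrK. Qed.

Lemma lamD x y z : lam x (y + z) = lam x y + lam x z.
Proof. by rewrite /lam circDr -addrA addrACA. Qed.

Lemma lamx0 x : lam x 0 = 0.
Proof. by rewrite /lam circx0 subrr. Qed.

Lemma lamB x y z : lam x (y - z) = lam x y - lam x z.
Proof. by apply/eqP; rewrite eq_sym subr_eq -lamD subrK. Qed.

Lemma lamMn x y m : lam x (y *+ m) = lam x y *+ m.
Proof. by elim: m => [|m IH]; rewrite ?lamx0 // !mulrS lamD IH. Qed.

Lemma lam_sum x I (r : seq I) (P : pred I) (F : I -> A) :
  lam x (\sum_(i <- r | P i) F i) = \sum_(i <- r | P i) lam x (F i).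
Proof. by elim/big_rec2: _ => [|i y1 y2 _ <-]; rewrite ?lamx0 // lamD. Qed.

Lemma lam_circ x y w : lam (circ x y) w = lam x (lam y w).
Proof. by rewrite lamB /lam circA opprB addrA subrK. Qed.

Lemma lam0x w : lam 0 w = w.
Proof. by rewrite /lam circ0x subr0. Qed.

Lemma bstarE x y : star x y = lam x y - y.
Proof. by []. Qed.

Lemma lamE x y : lam x y = y + star x y.
Proof. by rewrite bstarE addrC subrK. Qed.

Lemma bstarD x y z : star x (y + z) = star x y + star x z.
Proof. by rewrite !bstarE lamD opprD addrACA. Qed.

Lemma bstarx0 x : star x 0 = 0.
Proof. by rewrite bstarE lamx0 subr0. Qed.

Lemma bstarN x y : star x (- y) = - star x y.
Proof. by apply/eqP; rewrite -addr_eq0 -bstarD addNr bstarx0. Qed.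

Lemma bstarB x y z : star x (y - z) = star x y - star x z.
Proof. by rewrite bstarD bstarN. Qed.

Lemma bstarMn x y m : star x (y *+ m) = star x y *+ m.
Proof. by elim: m => [|m IH]; rewrite ?bstarx0 // !mulrS bstarD IH. Qed.

Lemma bstar0x w : star 0 w = 0.
Proof. by rewrite bstarE lam0x subrr. Qed.

Lemma bstar_circ x y w : star (circ x y) w = star x w + lam x (star y w).
Proof. by rewrite !bstarE lam_circ (lamB x (lam y w) w) [RHS]addrC addrA subrK. Qed.

End BraceCalculus.

Section Layers.
Variables (A : zmodType) (circ : A -> A -> A).
Local Notation star := (bstar circ).
Local Notation L := (bpow circ).

Lemma addgen_ind (S P : A -> Prop) : P 0 -> (forall x y, P x -> P y -> P (x + y)) ->
  (forall x, P x -> P (- x)) -> (forall x, S x -> P x) -> forall x, addgen S x -> P x.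
Proof. by move=> P0 PD PN PS x; elim=> //; auto. Qed.

Lemma bpow_aux_stable m m' i : (0 < i)%N -> (i <= m.+1)%N -> (m <= m')%N ->
  bpow_aux circ m' i = bpow_aux circ m i.
Proof.
move=> i0 im; elim: m' => [|m' IH]; first by rewrite leqn0 => /eqP ->.
rewrite leq_eqVlt => /orP [/eqP -> //|]; rewrite ltnS => mm'.
by rewrite /= (leq_trans im _) ?IH.
Qed.

Lemma bpow_aux_bpow m i : (0 < i)%N -> (i <= m.+1)%N -> bpow_aux circ m i = L i.
Proof.
case: i => // i _ im; rewrite /bpow (bpow_aux_stable (m := i)) //=.
by case: i {im} => //= i; rewrite ltnSn.
Qed.

Lemma bpowSS s : L s.+2 = addgen (fun x => exists j, [/\ (1 <= j)%N, (j <= s.+1)%N &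
                   bstar_set circ (bpow_aux circ s j) (bpow_aux circ s (s.+2 - j)) x]).
Proof. by rewrite /bpow /= leqnn /= ltnn. Qed.

Lemma bpow_small s x : (s <= 1)%N -> L s x.
Proof. by case: s => [|[|]]. Qed.

Lemma bpow0 s : L s 0.
Proof. by case: s => [|[|s]] //; rewrite bpowSS; apply: addgen_0. Qed.

Lemma bpowD s x y : L s x -> L s y -> L s (x + y).
Proof. by case: s => [|[|s]] //; rewrite bpowSS; apply: addgen_add. Qed.

Lemma bpowN s x : L s x -> L s (- x).
Proof. by case: s => [|[|s]] //; rewrite bpowSS; apply: addgen_opp. Qed.

Lemma bpowMn s x m : L s x -> L s (x *+ m).
Proof.
by move=> Lx; elim: m => [|m IH]; rewrite ?mulr0n ?mulrS; [apply: bpow0 | apply: bpowD].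
Qed.

Lemma bpow_bstar_pos i j x y : (0 < i)%N -> (0 < j)%N -> L i x -> L j y ->
  L (i + j) (star x y).
Proof.
case: i => // i; case: j => // j _ _ Lx Ly; rewrite addSn addnS bpowSS.
apply: addgen_in; exists i.+1; split; [by [] | lia |].
rewrite (_ : ((i + j).+2 - i.+1 = j.+1)%N); last by lia.
rewrite !bpow_aux_bpow //; try lia.
by apply: addgen_in; exists x, y.
Qed.

Lemma bpowS_incl s x : L s.+1 x -> L s x.
Proof.
elim: s {-2}s (leqnn s) x => [|N IH] [|[|s]] //= sN x.
have ind S := @addgen_ind S (L s.+2) (bpow0 _) (@bpowD _) (@bpowN _).
rewrite bpowSS; apply: (ind _) => {}x [j [j1 js]]; rewrite !bpow_aux_bpow; try lia.
apply: (ind _) => _ [y [z [Ly Lz ->]]].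
have [jl|je] := ltnP j s.+2.
  have Lz' : L (s.+2 - j) z.
    by apply: IH; [lia | rewrite -subSn //; lia].
  by have := bpow_bstar_pos j1 _ Ly Lz'; rewrite subnKC ?subn_gt0 //; apply.
have ej : j = s.+2 by lia.
subst j; rewrite !subSS subSnn in Lz.
have Ly' : L s.+1 y by apply: IH => //; lia.
by rewrite -addn1; apply: bpow_bstar_pos.
Qed.

Lemma bpow_incl s s' x : (s <= s')%N -> L s' x -> L s x.
Proof.
move=> ss'; rewrite -(subnKC ss'); elim: (s' - s)%N => [|d IH]; first by rewrite addn0.
by rewrite addnS => /bpowS_incl; apply: IH.
Qed.

Lemma bpow_bstar i j x y : L i x -> L j y -> L (i + j) (star x y).
Proof.
have pos s z : L s z -> L (maxn s 1) z by case: s => [|s] // Lz; rewrite (maxn_idPl _).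
move=> /pos Lx /pos Ly; apply: (@bpow_incl _ (maxn i 1 + maxn j 1)); first by lia.
by apply: bpow_bstar_pos; rewrite ?leq_maxr.
Qed.

Lemma bpow_iter_bstar s j r x h : L s x -> L j h -> L (j + r * s) (iter r (star x) h).
Proof.
move=> Lx Lh; elim: r => [|r IH]; first by rewrite mul0n addn0.
by rewrite iterS mulSn addnCA; apply: bpow_bstar.
Qed.

End Layers.

Definition mulrn_invertible (A : zmodType) (t : nat) :=
  exists M, forall v : A, v *+ (t * M) = v.

Section GradedPoly.
Variables (A : zmodType) (circ : A -> A -> A).
Local Notation L := (bpow circ).

(* The index [i] grades coefficients by degree; the depth [d] drives the
   downward induction in [gpoly_bstar_poly]. *)
Inductive gpoly (i d : nat) : (nat -> nat -> A) -> Prop :=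
| gpoly_monom u a b : L (i + a + b) u -> L d u ->
    gpoly i d (fun m l => u *+ (m ^ a * l ^ b))
| gpoly_add F G : gpoly i d F -> gpoly i d G -> gpoly i d (fun m l => F m l + G m l)
| gpoly_ext F G : (forall m l, F m l = G m l) -> gpoly i d F -> gpoly i d G.

Lemma gpoly_const i d v : L i v -> L d v -> gpoly i d (fun _ _ => v).
Proof.
move=> Li Ld; apply: (gpoly_ext (F := fun m l => v *+ (m ^ 0 * l ^ 0))) => //.
by apply: gpoly_monom; rewrite ?addn0.
Qed.

Lemma gpoly0 i d F : (forall m l, F m l = 0) -> gpoly i d F.
Proof.
by move=> F0; apply: (gpoly_ext (fun m l => esym (F0 m l))); apply: gpoly_const; apply: bpow0.
Qed.

Lemma gpoly_linear a b : gpoly 0 1 (fun m l => a *+ m + b *+ l).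
Proof.
apply: gpoly_add.
  apply: (gpoly_ext (F := fun m l => a *+ (m ^ 1 * l ^ 0))) => [m l|].
    by rewrite muln1.
  by apply: gpoly_monom; apply: bpow_small.
apply: (gpoly_ext (F := fun m l => b *+ (m ^ 0 * l ^ 1))) => [m l|].
  by rewrite mul1n.
by apply: gpoly_monom; apply: bpow_small.
Qed.

Lemma gpoly_incl i d i' d' F : (i' <= i)%N -> (d' <= d)%N -> gpoly i d F -> gpoly i' d' F.
Proof.
move=> ii' dd'; elim=> [u a b Li Ld|F1 G1 _ PF _ PG|F1 G1 FG _ PF].
- by apply: gpoly_monom; [apply: bpow_incl Li; lia | apply: bpow_incl Ld].
- exact: gpoly_add.
- exact: gpoly_ext FG PF.
Qed.

Lemma gpoly_depth i d F m l : gpoly i d F -> L d (F m l).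
Proof. by elim=> [u a b _ Ld|F1 G1 _ LF _ LG|F1 G1 <- //]; [apply: bpowMn | apply: bpowD]. Qed.

Lemma gpolyMn i d F c : gpoly i d F -> gpoly i d (fun m l => F m l *+ c).
Proof.
elim=> [u a b Li Ld|F1 G1 _ PF _ PG|F1 G1 FG _ PF].
- apply: (gpoly_ext (F := fun m l => (u *+ c) *+ (m ^ a * l ^ b))).
    by move=> m l; rewrite -!mulrnA mulnC.
  by apply: gpoly_monom; apply: bpowMn.
- by apply: (gpoly_ext _ (gpoly_add PF PG)) => m l; rewrite mulrnDl.
- by apply: (gpoly_ext _ PF) => m l; rewrite FG.
Qed.

Lemma gpolyN i d F : gpoly i d F -> gpoly i d (fun m l => - F m l).
Proof.
elim=> [u a b Li Ld|F1 G1 _ PF _ PG|F1 G1 FG _ PF].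
- apply: (gpoly_ext (F := fun m l => (- u) *+ (m ^ a * l ^ b))).
    by move=> m l; rewrite mulNrn.
  by apply: gpoly_monom; apply: bpowN.
- by apply: (gpoly_ext _ (gpoly_add PF PG)) => m l; rewrite opprD.
- by apply: (gpoly_ext _ PF) => m l; rewrite FG.
Qed.

Lemma gpolyB i d F G : gpoly i d F -> gpoly i d G -> gpoly i d (fun m l => F m l - G m l).
Proof. by move=> PF PG; apply: gpoly_add => //; apply: gpolyN. Qed.

Lemma gpoly_sum i d I (r : seq I) (F : I -> nat -> nat -> A) :
  (forall x, gpoly i d (F x)) -> gpoly i d (fun m l => \sum_(x <- r) F x m l).
Proof.
move=> PF; elim: r => [|x r IH]; first by apply: gpoly0 => m l; rewrite big_nil.
by apply: (gpoly_ext _ (gpoly_add (PF x) IH)) => m l; rewrite big_cons.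
Qed.

Lemma gpoly_shift i d a b F : gpoly (i + a + b) d F ->
  gpoly i d (fun m l => F m l *+ (m ^ a * l ^ b)).
Proof.
elim=> [u a' b' Li Ld|F1 G1 _ PF _ PG|F1 G1 FG _ PF].
- apply: (gpoly_ext (F := fun m l => u *+ (m ^ (a' + a) * l ^ (b' + b)))).
    by move=> m l; rewrite -mulrnA !expnD mulnACA.
  by apply: gpoly_monom => //; apply: bpow_incl Li; lia.
- by apply: (gpoly_ext _ (gpoly_add PF PG)) => m l; rewrite mulrnDl.
- by apply: (gpoly_ext _ PF) => m l; rewrite FG.
Qed.

(* [(t + 1) C(N, t + 1) = (N - t) C(N, t)], and [t + 1] is invertible on [A]. *)
Lemma gpoly_binomial p t a b i d F :
  (forall t, (0 < t < p)%N -> mulrn_invertible A t) -> (t < p)%N ->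
  gpoly (i + t * (a + b)) d F -> gpoly i d (fun m l => F m l *+ 'C(m ^ a * l ^ b, t)).
Proof.
move=> invertible; elim: t i F => [|t IH] i F tp PF.
  by rewrite mul0n addn0 in PF; apply: (gpoly_ext _ PF) => m l; rewrite bin0 mulr1n.
have [M tM] : mulrn_invertible A t.+1 by apply: invertible; lia.
pose G m l := F m l *+ M *+ 'C(m ^ a * l ^ b, t).
have PG : gpoly (i + (a + b)) d G.
  by apply: IH; [lia | apply: gpolyMn; rewrite -addnA -mulSn].
apply: (gpoly_ext (F := fun m l => G m l *+ (m ^ a * l ^ b) - G m l *+ t)).
  move=> m l; rewrite /G -!mulrnA; set N := (m ^ a * l ^ b)%N; set C := 'C(N, t).
  have binS : (t.+1 * M * 'C(N, t.+1) = M * (C * N) - M * (C * t))%N.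
    by rewrite mulnAC mul_bin_left !mulnBl; nia.
  rewrite -[in RHS](tM (F m l)) -mulrnA binS mulrnBr //.
  by have [tN|/bin_small C0] := leqP t N; rewrite !leq_mul2l ?tN ?orbT // /C C0 /= orbT.
apply: gpolyB; first by apply: gpoly_shift; rewrite -addnA.
by apply: gpolyMn; apply: gpoly_incl PG; rewrite ?leq_addr.
Qed.

End GradedPoly.

Section Polynomiality.
Variables (A : zmodType) (circ : A -> A -> A).
Hypothesis brace : is_brace circ.
Variable k : nat.
Hypothesis nil_k : is_zero_set (bpow circ k).
Variable p : nat.
Hypothesis invertible : forall t, (0 < t < p)%N -> mulrn_invertible A t.
Hypothesis k_lt_p : (k < p)%N.
Local Notation L := (bpow circ).
Local Notation star := (bstar circ).
Local Notation lam := (lam circ).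
Local Notation gpoly := (gpoly circ).

Lemma bpow_eq0 s x : (k <= s)%N -> L s x -> x = 0.
Proof. by move=> ks Lx; apply: nil_k; apply: bpow_incl Lx. Qed.

Lemma iter_bstar_eq0 s r x h : (0 < s)%N -> (k <= r)%N -> L s x -> iter r (star x) h = 0.
Proof.
move=> s0 kr Lx; apply: (@bpow_eq0 (0 + r * s)).
  by rewrite add0n (leq_trans kr) // leq_pmulr.
by apply: bpow_iter_bstar => //; apply: bpow_small.
Qed.

Lemma iter_lam_binomial s x w N : (0 < s)%N -> L s x ->
  iter N (lam x) w = \sum_(t < k.+1) iter t (star x) w *+ 'C(N, t).
Proof.
move=> s0 Lx; elim: N => [|N IH].
  by rewrite big_ord_recl /= mulr1n big1 ?addr0 // => t _.
rewrite iterS IH (lam_sum brace).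
under eq_bigr => t _ do rewrite (lamMn brace) lamE mulrnDl.
rewrite big_split /= [X in _ + X]big_ord_recr /= -iterS.
rewrite (iter_bstar_eq0 _ s0 (leqnSn k) Lx) mul0rn addr0.
rewrite [RHS]big_ord_recl [X in X + _]big_ord_recl /= !bin0.
under [in RHS]eq_bigr => t _ do rewrite binS mulrnDr.
by rewrite big_split /= -!addrA.
Qed.

Definition cpow N x := iter N (circ x) 0.

Lemma lam_cpow N x w : lam (cpow N x) w = iter N (lam x) w.
Proof.
elim: N => [|N IH]; first by rewrite /= (lam0x brace).
by rewrite /cpow iterS (lam_circ brace) -/(cpow N x) IH.
Qed.

Lemma cpow_binomial s x N : (0 < s)%N -> L s x ->
  cpow N x = \sum_(t < k.+1) iter t (star x) x *+ 'C(N, t.+1).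
Proof.
move=> s0 Lx; elim: N => [|N IH]; first by rewrite big1 // => t _; rewrite bin0n.
rewrite /cpow iterS -/(cpow N x) circE IH (lam_sum brace).
under eq_bigr => t _ do rewrite (lamMn brace) lamE mulrnDl.
under [in RHS]eq_bigr => t _ do rewrite binS mulrnDr.
rewrite !big_split /= addrCA; congr (_ + _).
rewrite [RHS]big_ord_recl /= bin0 mulr1n big_ord_recr /= -iterS.
by rewrite (iter_bstar_eq0 _ s0 (leqnSn k) Lx) mul0rn addr0.
Qed.

(* Iterating [z |-> h - x * z] from [0]: successive iterates differ by an element
   one layer deeper each time, so [k + 1] iterations reach a fixed point. *)
Definition lam_preim x h := iter k.+1 (fun z => h - star x z) 0.

Lemma lam_preimK x h : lam x (lam_preim x h) = h.
Proof.
set f := fun z => h - star x z.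
have step n : L n.+1 (iter n.+1 f 0 - iter n f 0).
  elim: n => [|n IH]; first exact: bpow_small.
  set a := iter n.+1 f 0 in IH *; set b := iter n f 0 in IH *.
  have -> : iter n.+2 f 0 - a = - star x (a - b).
    by rewrite (bstarB brace) /a /b !iterS /f opprB [LHS]addrC addrA opprB subrK.
  by apply/bpowN; rewrite -add1n; apply: bpow_bstar IH; apply: bpow_small.
have fixed : f (lam_preim x h) = lam_preim x h.
  by apply/eqP; rewrite -subr_eq0 -iterS; apply/eqP/(@bpow_eq0 k.+2); [lia | exact: step].
by rewrite lamE -{1}fixed subrK.
Qed.

Lemma lam_preim_subE x h : lam_preim x h - h = - star x (lam_preim x h).
Proof. by rewrite -{2}(lam_preimK x h) lamE opprD addNKr. Qed.

Definition bstar_poly i d (F : nat -> nat -> A) := forall w j j', L j w -> L j' w ->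
  gpoly (i + j) (d + j') (fun m l => star (F m l) w).

Lemma bstar_poly_ext i d F G : (forall m l, F m l = G m l) ->
  bstar_poly i d F -> bstar_poly i d G.
Proof.
by move=> FG PF w j j' Lw Lw'; apply: (gpoly_ext _ (PF w j j' Lw Lw')) => m l; rewrite FG.
Qed.

Lemma bstar_polyS i d F : bstar_poly i d.+1 F -> bstar_poly i d F.
Proof. by move=> PF w j j' Lw Lw'; apply: gpoly_incl (PF w j j' Lw Lw'). Qed.

Lemma gpoly_bstar i d F i' d' G : bstar_poly i d F -> gpoly i' d' G ->
  gpoly (i + i') (d + d') (fun m l => star (F m l) (G m l)).
Proof.
move=> PF; elim=> [v a b Li Ld|G1 G2 _ P1 _ P2|G1 G2 G12 _ P1].
- apply: (gpoly_ext (F := fun m l => star (F m l) v *+ (m ^ a * l ^ b))).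
    by move=> m l; rewrite (bstarMn brace).
  by apply: gpoly_shift; rewrite -!addnA; apply: PF => //; rewrite !addnA.
- by apply: (gpoly_ext _ (gpoly_add P1 P2)) => m l; rewrite (bstarD brace).
- by apply: (gpoly_ext _ P1) => m l; rewrite G12.
Qed.

Lemma gpoly_lam_preim i d d' F G : bstar_poly i d F -> gpoly i d' G ->
  gpoly i d' (fun m l => lam_preim (F m l) (G m l)).
Proof.
move=> PF PG; rewrite /lam_preim; elim: k.+1 => [|n IH]; first exact: gpoly0.
apply: (gpoly_ext (fun m l => esym (iterS _ _ _))); apply: gpolyB => //.
by apply: gpoly_incl (gpoly_bstar PF IH); rewrite ?leq_addl.
Qed.

Lemma gpoly_lam_preim_sub i d d' F G : (0 < d)%N -> bstar_poly i d F -> gpoly i d' G ->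
  gpoly i d'.+1 (fun m l => lam_preim (F m l) (G m l) - G m l).
Proof.
move=> d0 PF PG.
apply: (gpoly_ext (F := fun m l => - star (F m l) (lam_preim (F m l) (G m l)))).
  by move=> m l; rewrite lam_preim_subE.
apply: gpolyN; apply: gpoly_incl (gpoly_bstar PF (gpoly_lam_preim PF PG)); lia.
Qed.

Lemma bstar_poly_circ i d F G : bstar_poly i d F -> bstar_poly i d G ->
  bstar_poly i d (fun m l => circ (F m l) (G m l)).
Proof.
move=> PF PG w j j' Lw Lw'; have PGw := PG w j j' Lw Lw'.
apply: (gpoly_ext (F := fun m l => star (F m l) w +
  (star (G m l) w + star (F m l) (star (G m l) w)))).
  by move=> m l; rewrite (bstar_circ brace) lamE.
apply: gpoly_add (PF w j j' Lw Lw') (gpoly_add PGw _).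
by apply: gpoly_incl (gpoly_bstar PF PGw); rewrite ?leq_addl.
Qed.

Lemma bstar_poly_cpow i d u a b : (0 < d)%N -> L (i + a + b) u -> L d u ->
  bstar_poly i d (fun m l => cpow (m ^ a * l ^ b) u).
Proof.
move=> d0 Li Ld w j j' Lw Lw'.
apply: (gpoly_ext (F := fun m l =>
  \sum_(t < k) iter t.+1 (star u) w *+ 'C(m ^ a * l ^ b, t.+1))).
  move=> m l; rewrite bstarE lam_cpow (iter_lam_binomial _ _ d0 Ld) big_ord_recl /=.
  by rewrite bin0 mulr1n [w + _]addrC addrK.
apply: gpoly_sum => t; apply: (gpoly_binomial invertible); first by have := ltn_ord t; lia.
apply: gpoly_const.
  by apply: bpow_incl (bpow_iter_bstar _ Li Lw); nia.
by apply: bpow_incl (bpow_iter_bstar _ Ld Lw'); nia.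
Qed.

Lemma gpoly_sub_cpow i d u a b : (0 < d)%N -> L (i + a + b) u -> L d u ->
  gpoly i d.+1 (fun m l => u *+ (m ^ a * l ^ b) - cpow (m ^ a * l ^ b) u).
Proof.
move=> d0 Li Ld.
apply: (gpoly_ext (F := fun m l =>
  - \sum_(t < k) iter t.+1 (star u) u *+ 'C(m ^ a * l ^ b, t.+2))).
  move=> m l; rewrite (cpow_binomial _ d0 Ld) big_ord_recl /= bin1.
  by rewrite opprD addNKr.
apply: gpolyN; apply: gpoly_sum => t.
have [tk|kt] := ltnP t.+1 k; last first.
  by apply: gpoly0 => m l; rewrite (iter_bstar_eq0 _ d0 kt Ld) mul0rn.
apply: (gpoly_binomial invertible); first by lia.
apply: gpoly_const.
  by apply: bpow_incl (bpow_iter_bstar _ Li Li); nia.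
by apply: bpow_incl (bpow_iter_bstar _ Ld Ld); nia.
Qed.

Lemma bstar_polyD_deep i d F G :
  (forall H, gpoly i d.+1 H -> bstar_poly i d.+1 H) ->
  bstar_poly i d F -> gpoly i d.+1 G -> bstar_poly i d (fun m l => F m l + G m l).
Proof.
move=> deeper PF PG; have PZ := gpoly_lam_preim PF PG.
apply: (bstar_poly_ext (F := fun m l => circ (F m l) (lam_preim (F m l) (G m l)))).
  by move=> m l; rewrite circE lam_preimK.
exact: bstar_poly_circ PF (bstar_polyS (deeper _ PZ)).
Qed.

(* A monomial is
   [u^(o N)] plus a term one layer deeper, and a sum [F1 + F2] is [F1 o Z] with
   [Z] equal to [F2] plus a term one layer deeper. *)
Theorem gpoly_bstar_poly d i F : (0 < d)%N -> gpoly i d F -> bstar_poly i d F.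
Proof.
move: {2}(k - d)%N (leqnn (k - d)) => e; elim: e d i F => [|e IHe] d i F kd d0 PF.
  move=> w j j' Lw Lw'; apply: gpoly0 => m l.
  have -> : F m l = 0 by apply: (@bpow_eq0 d); [lia | exact: gpoly_depth PF].
  exact: bstar0x.
have deeper G : gpoly i d.+1 G -> bstar_poly i d.+1 G by apply: IHe; lia.
elim: PF => [u a b Li Ld|F1 F2 P1 B1 P2 B2|F1 F2 F12 _ B1].
- apply: (bstar_poly_ext (F := fun m l =>
    cpow (m ^ a * l ^ b) u + (u *+ (m ^ a * l ^ b) - cpow (m ^ a * l ^ b) u))).
    by move=> m l; rewrite addrC subrK.
  exact: bstar_polyD_deep deeper (bstar_poly_cpow d0 Li Ld) (gpoly_sub_cpow d0 Li Ld).
- pose Z m l := lam_preim (F1 m l) (F2 m l).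
  have BZ : bstar_poly i d Z.
    apply: (bstar_poly_ext (F := fun m l => F2 m l + (Z m l - F2 m l))).
      by move=> m l; rewrite addrC subrK.
    exact: bstar_polyD_deep deeper B2 (gpoly_lam_preim_sub d0 B1 P2).
  apply: (bstar_poly_ext (F := fun m l => circ (F1 m l) (Z m l))).
    by move=> m l; rewrite circE lam_preimK.
  exact: bstar_poly_circ B1 BZ.
- exact: bstar_poly_ext F12 B1.
Qed.

End Polynomiality.

Definition wsum (A : zmodType) (p xi : nat) (f : nat -> A) :=
  \sum_(i < p.-1) f (xi ^ i)%N *+ (xi ^ (p.-1 - i))%N.

Lemma bdot_wsum (A : zmodType) (circ : A -> A -> A) p xi a b :
  bdot circ p xi a b = wsum p xi (fun m => bstar circ (a *+ m) b).
Proof. by []. Qed.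

Section WeightedSum.
Variables (A : zmodType) (circ : A -> A -> A) (k p xi : nat).
Hypothesis nil_k : is_zero_set (bpow circ k).
Hypothesis wsum_pow :
  forall t (v : A), (2 <= t < k)%N -> wsum p xi (fun m => v *+ (m ^ t)%N) = 0.
Local Notation wsum := (@wsum A p xi).

Lemma eq_wsum f g : f =1 g -> wsum f = wsum g.
Proof. by move=> fg; apply: eq_bigr => i _; rewrite fg. Qed.

Lemma wsumD f g : wsum (fun m => f m + g m) = wsum f + wsum g.
Proof. by rewrite -big_split; apply: eq_bigr => i _; rewrite mulrnDl. Qed.

Lemma wsum_eq0 f : f =1 (fun _ => 0) -> wsum f = 0.
Proof. by move=> f0; rewrite /wsum big1 // => i _; rewrite f0 mul0rn. Qed.

(* The mixed difference [F(m,m) + F(0,0) - F(m,0) - F(0,m)] only retains the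
   monomials of total degree at least 2, which [wsum] annihilates. *)
Lemma wsum_gpoly_mixed d F : gpoly circ 0 d F ->
  wsum (fun m => F m m) + wsum (fun _ => F 0%N 0%N) =
  wsum (fun m => F m 0%N) + wsum (fun m => F 0%N m).
Proof.
elim=> [u a b Li _|F1 F2 _ E1 _ E2|F1 F2 F12 _ E].
- case: a Li => [|a] Li; first by rewrite addrC.
  case: b Li => [|b] Li; first by [].
  have -> : wsum (fun m => u *+ (m ^ a.+1 * 0 ^ b.+1)) = 0.
    by apply: wsum_eq0 => m; rewrite exp0n // muln0.
  have -> : wsum (fun m => u *+ (0 ^ a.+1 * m ^ b.+1)) = 0.
    by apply: wsum_eq0 => m; rewrite exp0n.
  have -> : wsum (fun _ => u *+ (0 ^ a.+1 * 0 ^ b.+1)) = 0.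
    by apply: wsum_eq0 => m; rewrite exp0n.
  under eq_wsum => m do rewrite -expnD -addSnnS.
  rewrite add0n -addSnnS in Li; have [abk|kab] := ltnP (a.+2 + b) k.
    by rewrite wsum_pow ?addr0.
  by rewrite (bpow_eq0 nil_k kab Li) wsum_eq0 ?addr0 // => m; rewrite mul0rn.
- by rewrite !wsumD addrACA E1 E2 addrACA.
- rewrite (eq_wsum (fun m => F12 m m)) (eq_wsum (fun m => F12 m 0)) in E.
  by rewrite (eq_wsum (fun m => F12 0 m)) F12 in E.
Qed.

End WeightedSum.

Lemma mulrn_card (A : finZmodType) (x : A) : x *+ #|A| = 0.
Proof.
have := @expg_cardG _ [set: A] x.
by rewrite FinRing.Theory.zmodXgE cardsT inE => ->.
Qed.

Lemma coprime_card_mulrn_invertible (A : finZmodType) t :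
  (0 < t)%N -> coprime t #|A| -> mulrn_invertible A t.
Proof.
move=> t0 /eqP tA; have [u v uv _] := egcdnP #|A| t0.
by exists u => x; rewrite mulnC uv tA mulrnDr mulrnA mulrn_card add0r.
Qed.

Section PowerSums.
Local Open Scope nat_scope.

(* [(y - 1) * sum_i y^i = y^r - 1]; if [q] divided [y - 1], the sum would be
   [r] modulo [q], hence coprime to [q], and [q^e] would divide [y - 1]. *)
Lemma dvdn_geom_sum q e y r : prime q -> ~~ (q %| r) -> 0 < y ->
  y ^ r = 1 %[mod q ^ e] -> y != 1 %[mod q ^ e] -> q ^ e %| \sum_(i < r) y ^ i.
Proof.
move=> q_pr q_r y0 yr y1.
have dvd_prod : q ^ e %| y.-1 * \sum_(i < r) y ^ i.
  by rewrite -predn_exp -subn1 -eqn_mod_dvd ?yr // expn_gt0 y0.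
have [cop|] := boolP (coprime y.-1 q).
  by rewrite -(@Gauss_dvdr _ y.-1) // coprime_sym coprimeXr.
rewrite coprime_sym prime_coprime // negbK => q_y1.
have y_q : y = 1 %[mod q] by apply/eqP; rewrite eqn_mod_dvd // subn1.
have sum_q : \sum_(i < r) y ^ i = r %[mod q].
  rewrite -modn_summ (eq_bigr (fun _ => 1 %% q)) => [|i _]; last first.
    by rewrite -modnXm y_q modnXm exp1n.
  by rewrite sum_nat_const card_ord modnMmr muln1.
have cop_sum : coprime (q ^ e) (\sum_(i < r) y ^ i).
  by rewrite coprimeXl // prime_coprime // /dvdn sum_q.
move: dvd_prod; rewrite Gauss_dvdl // => dvd_y1; case/negP: y1.
by rewrite eqn_mod_dvd // subn1.
Qed.

Lemma dvdn_xi_power_sum p g t : prime p -> primitive_root_mod (p ^ p) g -> 2 <= t < p ->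
  p ^ p %| \sum_(i < p.-1) ((g ^ p ^ p.-1) ^ i) ^ t * (g ^ p ^ p.-1) ^ (p.-1 - i).
Proof.
move=> p_pr [g_cop g_prim] /andP [t2 tp]; have p1 := prime_gt1 p_pr.
set M := p ^ p; set xi := g ^ p ^ p.-1; set y := xi ^ t.-1.
have M1 : 1 < M by rewrite -(expn0 p) ltn_exp2l //; lia.
have g0 : 0 < g.
  by rewrite lt0n; apply: contraTneq g_cop => ->; rewrite /coprime gcd0n; lia.
have totM : totient M = p.-1 * p ^ p.-1 by rewrite totient_pfactor //; lia.
have -> : \sum_(i < p.-1) (xi ^ i) ^ t * xi ^ (p.-1 - i) = xi ^ p.-1 * \sum_(i < p.-1) y ^ i.
  rewrite big_distrr /=; apply: eq_bigr => i _.
  by rewrite /y -!expnM -!expnD -!mulnDr; congr (g ^ (_ * _)); have := ltn_ord i; nia.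
apply: dvdn_mull; apply: dvdn_geom_sum => //.
- by apply/negP => /dvdn_leq; lia.
- by rewrite !expn_gt0 g0.
- have xi_p1 : xi ^ p.-1 = 1 %[mod M] by rewrite -expnM mulnC -totM Euler_exp_totient.
  by rewrite /y -expnM mulnC expnM -modnXm xi_p1 modnXm exp1n.
apply/eqP => y1; apply: (g_prim (p ^ p.-1 * t.-1)); last by rewrite expnM.
  by rewrite muln_gt0 expn_gt0; lia.
by rewrite totM mulnC ltn_pmul2r ?expn_gt0; lia.
Qed.

End PowerSums.

Lemma wsum_pow_eq0 (A : finZmodType) p n g t (v : A) :
  prime p -> primitive_root_mod (p ^ p) g -> (n <= p)%N -> #|A| = (p ^ n)%N ->
  (2 <= t < p)%N -> wsum p (g ^ p ^ p.-1) (fun m => v *+ (m ^ t)%N) = 0.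
Proof.
move=> p_pr g_prim np cardA t2p; rewrite /wsum.
under eq_bigr do rewrite -mulrnA; rewrite sumrMnr.
have /dvdnP [q ->] := dvdn_trans (dvdn_exp2l p np) (dvdn_xi_power_sum p_pr g_prim t2p).
by rewrite mulrnA -cardA mulrn_card.
Qed.

Theorem proposition4 (p n k : nat) (A : finZmodType) (circ : A -> A -> A)
  (gamma : nat) :
  prime p -> (n.+1 < p)%N -> (k < p)%N ->
  is_brace circ -> #|A| = (p ^ n)%N ->
  strongly_nilpotent circ -> nilpotency_index circ k ->
  primitive_root_mod (p ^ p) gamma ->
  let xi := (gamma ^ (p ^ p.-1))%N in
  forall a b c : A,
    bdot circ p xi (a + b) c = bdot circ p xi a c + bdot circ p xi b c /\
    bdot circ p xi a (b + c) = bdot circ p xi a b + bdot circ p xi a c.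
Proof.
move=> p_pr n_lt k_lt brace cardA _ [nil_k _] g_prim xi a b c.
split; last first.
  by rewrite /bdot -big_split; apply: eq_bigr => i _; rewrite (bstarD brace) mulrnDl.
have invertible t : (0 < t < p)%N -> mulrn_invertible A t.
  move=> /andP [t0 tp]; apply: coprime_card_mulrn_invertible => //.
  by rewrite cardA coprimeXr // coprime_sym prime_coprime //; apply/negP => /dvdn_leq; lia.
have wsum_pow t (v : A) : (2 <= t < k)%N -> wsum p xi (fun m => v *+ (m ^ t)%N) = 0.
  by move=> t2k; apply: (wsum_pow_eq0 (n := n) v p_pr g_prim); lia.
pose F m l := bstar circ (a *+ m + b *+ l) c.
have PF : gpoly circ 0 1 F := gpoly_bstar_poly brace nil_k invertible k_lt (ltn0Sn 0)
  (gpoly_linear circ a b) (bpow_small circ c (leq0n 1)) (bpow_small circ c (leq0n 1)).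
have := wsum_gpoly_mixed nil_k wsum_pow PF.
rewrite (wsum_eq0 _ _ (f := fun _ => F 0%N 0%N)) => [|m]; last first.
  by rewrite /F !mulr0n addr0 (bstar0x brace).
have Fmm m : bstar circ ((a + b) *+ m) c = F m m by rewrite /F mulrnDl.
have Fm0 m : bstar circ (a *+ m) c = F m 0%N by rewrite /F mulr0n addr0.
have F0m m : bstar circ (b *+ m) c = F 0%N m by rewrite /F mulr0n add0r.
by rewrite !bdot_wsum (eq_wsum _ _ Fmm) (eq_wsum _ _ Fm0) (eq_wsum _ _ F0m) addr0.
Qed.
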